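(* Let $q=p^n$ with $p>2$ prime, $g\ge2$ with $\gcd(g,p)=1$, and $a,\alpha\in\mathbb{F}_q$, $\alpha\neq0$, such that $X: y^2=x^{2g+1}+a x^{g+1}+\alpha^g x$ is a (nonsingular) hyperelliptic curve of genus $g$. Let $\omega:(x,y)\mapsto(x,-y)$ be the hyperelliptic involution. Fix $\beta\in\overline{\mathbb{F}}_q$ with $\beta^2=\alpha$ (for odd $g$ we take $\beta^{g+1}=\alpha^{(g+1)/2}$). Then $\sigma:(x,y)\mapsto\left(\frac{\alpha}{x},\, y\frac{\beta^{g+1}}{x^{g+1}}\right)$ is a non-hyperelliptic involution of $X$, and: 1. If $g$ is odd, $X/\langle\sigma\rangle$ is given by $y^2=D_g(x,\alpha)+a$ and $X/\langle\omega\sigma\rangle$ is given by $y^2=(x^2-4\alpha)(D_g(x,\alpha)+a)$ (over $\mathbb{F}_q$). 2. If $g$ is even, $X/\langle\sigma\rangle$ is given by $y^2=(x+2\beta)(D_g(x,\alpha)+a)$ and $X/\langle\omega\sigma\rangle$ is given by $y^2=(x-2\beta)(D_g(x,\alpha)+a)$ (over $\mathbb{F}_q(\beta)$).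
   Context: For $m\ge1$ and $\alpha$ in a field, the Dickson polynomial $D_m(x,\alpha)=\sum_{i=0}^{\lfloor m/2\rfloor}\frac{m}{m-i}\binom{m-i}{i}(-\alpha)^i x^{m-2i}$ is the unique polynomial satisfying $D_m\!\left(u+\frac{\alpha}{u},\alpha\right)=u^m+\left(\frac{\alpha}{u}\right)^m$. ''Is given by'' means birationally equivalent to the stated curve. *)

From HB Require Import structures.
From mathcomp Require Import all_boot all_order all_algebra all_field.
Set Implicit Arguments. Unset Strict Implicit. Unset Printing Implicit Defensive.
Import Order.TTheory GRing.Theory.
Local Open Scope ring_scope.

(* Dickson polynomial D_m(x, alpha) = sum_{i=0}^{m/2} m/(m-i) C(m-i,i) (-alpha)^i x^(m-2i);
   the coefficient m/(m-i) * C(m-i,i) is an integer, computed in nat by exact division. *)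
Definition dickson (K : fieldType) (m : nat) (al : K) : {poly K} :=
  \sum_(i < m./2.+1)
     ((((m * 'C(m - i, i)) %/ (m - i))%N)%:R * (- al) ^+ i) *: 'X^(m - 2 * i).

Definition hyp_poly (K : fieldType) (g : nat) (a al : K) : {poly K} :=
  'X^(2 * g + 1) + a *: 'X^(g + 1) + (al ^+ g) *: 'X.

Section FF.
Variables (K L : fieldType) (iota : {rmorphism K -> L}).

Definition fixesK (s : L -> L) := forall k : K, s (iota k) = iota k.

Definition transc (u : L) :=
  forall P : {poly K}, P != 0 -> (map_poly iota P).[u] != 0.

(* z lies in K(u, v) when v is quadratic over K(u): z = A(u) + B(u) v, A, B in K(u). *)
Definition in_gen (u v z : L) :=
  exists P1 P2 Q1 Q2 : {poly K},
    z = (map_poly iota P1).[u] / (map_poly iota P2).[u]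
        + (map_poly iota Q1).[u] / (map_poly iota Q2).[u] * v.

(* The subfield S of L (containing K) is the function field K(u,v) of the
   curve v^2 = h(u), with u transcendental: i.e. S is K-isomorphic to the
   function field of the curve y^2 = h(x) via x |-> u, y |-> v. *)
Definition is_func_field (h : {poly K}) (u v : L) (S : pred L) :=
  [/\ transc u, v ^+ 2 = (map_poly iota h).[u], S u, S v &
      forall z, S z -> in_gen u v z].
End FF.

From HB Require Import structures.
From mathcomp Require Import all_boot all_order all_algebra all_field.
From mathcomp Require Import zify ring.
Set Implicit Arguments. Unset Strict Implicit. Unset Printing Implicit Defensive.
Import GRing.Theory.
Local Open Scope ring_scope.

(* Since [(al/x, y c / x^(g+1))] with [c^2 = al^(g+1)] is again a generic point of
   [y^2 = x^(2g+1) + a x^(g+1) + al^g x], the function field [K(x, y)] has an automorphism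
   [s] with [s x = al/x]. Every element is uniquely [A(x) + B(x) y], because [y] is not a
   rational function of [x] (odd degree). Such an element is fixed by [s] iff [A] and [B/e]
   are invariant under [x -> al/x], where [y e] is a fixed element; invariant rational
   functions of [x] are rational functions of [u = x + al/x], so the fixed field is
   [K(u, y e)]. Finally [y^2 = x^(g+1) (x^g + (al/x)^g + a)] and
   [D_g(x + al/x, al) = x^g + (al/x)^g] give [(y e)^2] as a polynomial in [u]: with
   [e = x^-(g+1)/2] and [e = (x - al/x) x^-(g+1)/2] for odd [g] (using
   [(x - al/x)^2 = u^2 - 4 al]), and [e = (x +- beta) x^-(g/2+1)] for even [g] (using
   [(x +- beta)^2 / x = u +- 2 beta]). *)

Section Evaluation.
Variables (K L : fieldType) (iota : {rmorphism K -> L}).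

Definition ev (z : L) (P : {poly K}) : L := (map_poly iota P).[z].

Lemma evD z P Q : ev z (P + Q) = ev z P + ev z Q.
Proof. by rewrite /ev rmorphD hornerD. Qed.
Lemma evN z P : ev z (- P) = - ev z P.
Proof. by rewrite /ev rmorphN hornerN. Qed.
Lemma evB z P Q : ev z (P - Q) = ev z P - ev z Q.
Proof. by rewrite evD evN. Qed.
Lemma evM z P Q : ev z (P * Q) = ev z P * ev z Q.
Proof. by rewrite /ev rmorphM hornerM. Qed.
Lemma evC z c : ev z c%:P = iota c.
Proof. by rewrite /ev map_polyC hornerC. Qed.
Lemma ev0 z : ev z 0 = 0.
Proof. by rewrite -[0]/(0%:P) evC rmorph0. Qed.
Lemma ev1 z : ev z 1 = 1.
Proof. by rewrite -[1]/(1%:P) evC rmorph1. Qed.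
Lemma evXn z n : ev z 'X^n = z ^+ n.
Proof. by rewrite /ev map_polyXn hornerXn. Qed.
Lemma evX z : ev z 'X = z.
Proof. by rewrite -['X]expr1 evXn. Qed.
Lemma evZ z c P : ev z (c *: P) = iota c * ev z P.
Proof. by rewrite /ev map_polyZ hornerZ. Qed.
Lemma ev_exp z P n : ev z (P ^+ n) = ev z P ^+ n.
Proof. by rewrite /ev rmorphXn horner_exp. Qed.
Lemma ev_sum z m (F : 'I_m -> {poly K}) : ev z (\sum_(i < m) F i) = \sum_(i < m) ev z (F i).
Proof. by rewrite /ev rmorph_sum horner_sum. Qed.

Lemma ev_wide z (P : {poly K}) n :
  (size P <= n)%N -> ev z P = \sum_(i < n) iota P`_i * z ^+ i.
Proof.
move=> hs; rewrite /ev (horner_coef_wide _ (_ : size (map_poly iota P) <= n)%N).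
  by apply: eq_bigr => i _; rewrite coef_map.
by rewrite size_map_poly.
Qed.

Lemma ev_fixesK (f : {rmorphism L -> L}) z P : fixesK iota f -> f (ev z P) = ev (f z) P.
Proof.
move=> hf; rewrite /ev -horner_map -map_poly_comp; congr horner.
by apply: eq_map_poly => k /=; exact: hf.
Qed.

Lemma ev_transc_neq0 z P : transc iota z -> P != 0 -> ev z P != 0.
Proof. by move=> tz /tz. Qed.

Lemma ev_transc_inj z P Q : transc iota z -> ev z P = ev z Q -> P = Q.
Proof.
move=> tz e; apply/eqP; rewrite -subr_eq0; apply/negPn/negP => /tz.
by rewrite -/(ev z (P - Q)) evB e subrr eqxx.
Qed.

Lemma transc_neq0 z : transc iota z -> z != 0.
Proof. by move=> tz; rewrite -(evX z) ev_transc_neq0 ?polyX_eq0. Qed.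

Lemma transc_sub_neq0 z b : transc iota z -> z - iota b != 0.
Proof. by move=> tz; have := ev_transc_neq0 tz (monic_neq0 (monicXsubC b)); rewrite evB evX evC. Qed.

Lemma transc_add_neq0 z b : transc iota z -> z + iota b != 0.
Proof. by move=> tz; rewrite -[iota b]opprK -rmorphN transc_sub_neq0. Qed.

Lemma transc_sqr_neq z b : transc iota z -> z ^+ 2 != iota b.
Proof.
move=> tz; have := ev_transc_neq0 tz (monic_neq0 (monicXnsubC b (isT : 0 < 2)%N)).
by rewrite evB evXn evC subr_eq0.
Qed.

(* Division by zero yields [0], whence the normalisation [ev_frac_proper]. *)
Definition ev_frac z (P Q : {poly K}) := ev z P / ev z Q.

Definition is_ratf z w := exists P Q : {poly K}, w = ev_frac z P Q.

Lemma ev_frac_proper P Q :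
  exists P' Q', Q' != 0 /\ forall z, ev_frac z P Q = ev_frac z P' Q'.
Proof.
have [->|nQ] := eqVneq Q 0; last by exists P, Q.
by exists 0, 1; split=> [|z]; rewrite ?oner_neq0 // /ev_frac !ev0 invr0 !mulr0 mul0r.
Qed.

Lemma ev_frac_eq0 z P Q : transc iota z -> ev_frac z P Q = 0 -> P = 0 \/ Q = 0.
Proof.
rewrite /ev_frac => tz /eqP; rewrite mulf_eq0 invr_eq0.
by case/orP=> /eqP e; [left | right]; apply: (ev_transc_inj tz); rewrite e ev0.
Qed.

Lemma ev_frac_transfer z z' P1 P2 R1 R2 :
  transc iota z -> transc iota z' ->
  ev_frac z P1 P2 = ev_frac z R1 R2 -> ev_frac z' P1 P2 = ev_frac z' R1 R2.
Proof.
move=> tz tz'.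
have null u A B : A = 0 \/ B = 0 -> ev_frac u A B = 0.
  by rewrite /ev_frac; case=> ->; rewrite ev0 ?mul0r ?invr0 ?mulr0.
have [P20|nP2] := eqVneq P2 0.
  move=> e; have /(ev_frac_eq0 tz) hR : ev_frac z R1 R2 = 0 by rewrite -e null //; right.
  by rewrite (null _ _ _ hR) null //; right.
have [R20|nR2] := eqVneq R2 0.
  move=> e; have /(ev_frac_eq0 tz) hP : ev_frac z P1 P2 = 0 by rewrite e null //; right.
  by rewrite (null _ _ _ hP) null //; right.
move=> /eqP; rewrite /ev_frac eqr_div ?ev_transc_neq0 // -!evM => /eqP /(ev_transc_inj tz) e.
by apply/eqP; rewrite eqr_div ?ev_transc_neq0 // -!evM e.
Qed.

Lemma ev_fracB z P1 Q1 P2 Q2 :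
  transc iota z -> Q1 != 0 -> Q2 != 0 ->
  ev_frac z P1 Q1 - ev_frac z P2 Q2 = ev_frac z (P1 * Q2 - P2 * Q1) (Q1 * Q2).
Proof.
move=> tz /(ev_transc_neq0 tz) n1 /(ev_transc_neq0 tz) n2.
by rewrite /ev_frac evB !evM; field; rewrite n1 n2.
Qed.

Lemma ev_fracM z P1 Q1 P2 Q2 :
  ev_frac z P1 Q1 * ev_frac z P2 Q2 = ev_frac z (P1 * P2) (Q1 * Q2).
Proof. by rewrite /ev_frac !evM invfM mulrACA. Qed.

Lemma ev_fracV z P Q : (ev_frac z P Q)^-1 = ev_frac z Q P.
Proof. by rewrite /ev_frac invfM invrK mulrC. Qed.

Lemma ev_fracN z P Q : - ev_frac z P Q = ev_frac z (- P) Q.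
Proof. by rewrite /ev_frac evN mulNr. Qed.

Lemma is_ratfB z u v : transc iota z -> is_ratf z u -> is_ratf z v -> is_ratf z (u - v).
Proof.
move=> tz [P1 [Q1 ->]] [P2 [Q2 ->]].
have [P1' [Q1' [n1 ->]]] := ev_frac_proper P1 Q1.
have [P2' [Q2' [n2 ->]]] := ev_frac_proper P2 Q2.
by rewrite ev_fracB //; do 2 eexists.
Qed.

Lemma is_ratfM z u v : is_ratf z u -> is_ratf z v -> is_ratf z (u * v).
Proof. by move=> [P1 [Q1 ->]] [P2 [Q2 ->]]; rewrite ev_fracM; do 2 eexists. Qed.

Lemma is_ratfV z u : is_ratf z u -> is_ratf z u^-1.
Proof. by move=> [P [Q ->]]; rewrite ev_fracV; do 2 eexists. Qed.

Lemma is_ratfN z u : is_ratf z u -> is_ratf z (- u).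
Proof. by move=> [P [Q ->]]; rewrite ev_fracN; do 2 eexists. Qed.

(* In [P^2 = h Q^2] the left side has odd size and the right side even size. *)
Lemma sqrt_not_ratf (h : {poly K}) z w :
  transc iota z -> w ^+ 2 = ev z h -> h != 0 -> ~~ odd (size h) -> ~ is_ratf z w.
Proof.
move=> tz hw nh eh [P0 [Q0]]; have [P [Q [nQ ->]]] := ev_frac_proper P0 Q0.
rewrite /ev_frac => ew; have nq := ev_transc_neq0 tz nQ.
have ePP : P * P = h * (Q * Q).
  by apply: (ev_transc_inj tz); rewrite !evM -hw ew; field.
have nP : P != 0.
  by apply: contra_eqN ePP => /eqP->; rewrite mul0r eq_sym !mulf_neq0.
have := congr1 (fun p : {poly K} => size p) ePP; rewrite /= !size_mul ?mulf_neq0 //.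
have := size_poly_gt0 P; have := size_poly_gt0 Q; rewrite nP nQ.
rewrite -[size h]odd_double_half (negbTE eh) add0n.
move: (size P) (size Q) (size h)./2 => sP sQ k; lia.
Qed.

Lemma ratf_coord_unique (h : {poly K}) z w a1 b1 a2 b2 :
  transc iota z -> w ^+ 2 = ev z h -> h != 0 -> ~~ odd (size h) ->
  is_ratf z a1 -> is_ratf z b1 -> is_ratf z a2 -> is_ratf z b2 ->
  a1 + b1 * w = a2 + b2 * w -> a1 = a2 /\ b1 = b2.
Proof.
move=> tz hw nh eh ra1 rb1 ra2 rb2 e.
have [eb|nb] := eqVneq b1 b2; first by split=> //; move: e; rewrite eb => /addIr.
case: (sqrt_not_ratf tz hw nh eh).
have -> : w = (a2 - a1) / (b1 - b2).
  apply: (canRL (mulfK _)); first by rewrite subr_eq0.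
  by transitivity (a1 + b1 * w - a1 - b2 * w); [ring | rewrite e; ring].
by apply: is_ratfM; [apply: is_ratfB | apply/is_ratfV/is_ratfB].
Qed.

End Evaluation.

Section QuadraticRepresentation.
Variables (K L : fieldType) (iota : {rmorphism K -> L}).

(* [(P1, P2, Q1, Q2)] stands for the element [P1/P2 + (Q1/Q2) w] of [K(z, w)]. *)
Definition qrep := ({poly K} * {poly K} * {poly K} * {poly K})%type.

Definition ev_qrep z w (t : qrep) :=
  ev_frac iota z t.1.1.1 t.1.1.2 + ev_frac iota z t.1.2 t.2 * w.

Definition proper_qrep (t : qrep) := (t.1.1.2 != 0) && (t.2 != 0).

Definition qrep_sub (t1 t2 : qrep) : qrep :=
  (t1.1.1.1 * t2.1.1.2 - t2.1.1.1 * t1.1.1.2, t1.1.1.2 * t2.1.1.2,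
   t1.1.2 * t2.2 - t2.1.2 * t1.2, t1.2 * t2.2).

(* [h] is the polynomial with [w ^+ 2 = h(z)]. *)
Definition qrep_mul (h : {poly K}) (t1 t2 : qrep) : qrep :=
  let: (P1, P2, Q1, Q2) := t1 in let: (R1, R2, S1, S2) := t2 in
  (P1 * R1 * (Q2 * S2) + Q1 * S1 * h * (P2 * R2), P2 * R2 * (Q2 * S2),
   P1 * S1 * (R2 * Q2) + R1 * Q1 * (P2 * S2), P2 * S2 * (R2 * Q2)).

Lemma ev_qrepC z w P : ev_qrep z w (P, 1, 0, 1) = ev iota z P.
Proof. by rewrite /ev_qrep /ev_frac /= ev1 ev0 invr1 !mulr1 mul0r addr0. Qed.

Lemma ev_qrep_w z w : ev_qrep z w (0, 1, 1, 1) = w.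
Proof. by rewrite /ev_qrep /ev_frac /= ev1 ev0 invr1 !mulr1 mul1r add0r. Qed.

Lemma qrep_proper_eq (t : qrep) :
  exists t', proper_qrep t' /\ forall z w, ev_qrep z w t = ev_qrep z w t'.
Proof.
case: t => [[[P1 P2] Q1] Q2].
have [P1' [P2' [n1 e1]]] := ev_frac_proper iota P1 P2.
have [Q1' [Q2' [n2 e2]]] := ev_frac_proper iota Q1 Q2.
exists (P1', P2', Q1', Q2'); split; first by rewrite /proper_qrep n1 n2.
by move=> z w; rewrite /ev_qrep /= e1 e2.
Qed.

Lemma ev_qrepB z w t1 t2 : transc iota z -> proper_qrep t1 -> proper_qrep t2 ->
  ev_qrep z w t1 - ev_qrep z w t2 = ev_qrep z w (qrep_sub t1 t2).
Proof.
case: t1 => [[[P1 P2] Q1] Q2]; case: t2 => [[[R1 R2] S1] S2].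
move=> tz /andP[/= /(ev_transc_neq0 tz) n1 /(ev_transc_neq0 tz) n2].
move=> /andP[/= /(ev_transc_neq0 tz) n3 /(ev_transc_neq0 tz) n4].
by rewrite /ev_qrep /ev_frac /= !evB !evM; field; rewrite n1 n2 n3 n4.
Qed.

Lemma ev_qrepM z w h t1 t2 : transc iota z -> w ^+ 2 = ev iota z h ->
  proper_qrep t1 -> proper_qrep t2 ->
  ev_qrep z w t1 * ev_qrep z w t2 = ev_qrep z w (qrep_mul h t1 t2).
Proof.
case: t1 => [[[P1 P2] Q1] Q2]; case: t2 => [[[R1 R2] S1] S2].
move=> tz hw /andP[/= /(ev_transc_neq0 tz) n1 /(ev_transc_neq0 tz) n2].
move=> /andP[/= /(ev_transc_neq0 tz) n3 /(ev_transc_neq0 tz) n4].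
by rewrite /ev_qrep /ev_frac /= !evD !evM -hw; field; rewrite n1 n2 n3 n4.
Qed.

Lemma in_gen_qrep x y z : in_gen iota x y z -> exists t : qrep, z == ev_qrep x y t.
Proof. by move=> [P1 [P2 [Q1 [Q2 e]]]]; exists (P1, P2, Q1, Q2); rewrite e. Qed.

End QuadraticRepresentation.

Section Transport.
Variables (K L : fieldType) (iota : {rmorphism K -> L}) (h : {poly K}) (x y x' y' : L).
Hypotheses (tx : transc iota x) (hy : y ^+ 2 = ev iota x h).
Hypotheses (nh : h != 0) (eh : ~~ odd (size h)).
Hypotheses (tx' : transc iota x') (hy' : y' ^+ 2 = ev iota x' h).
Hypothesis gen : forall z, in_gen iota x y z.

Definition transport z := ev_qrep iota x' y' (xchoose (in_gen_qrep (gen z))).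

Lemma transport_ev_qrep t : transport (ev_qrep iota x y t) = ev_qrep iota x' y' t.
Proof.
rewrite /transport.
have /eqP e := xchooseP (in_gen_qrep (gen (ev_qrep iota x y t))).
have ratf P Q : is_ratf iota x (ev_frac iota x P Q) by exists P, Q.
have [ea eb] := ratf_coord_unique tx hy nh eh (ratf _ _) (ratf _ _) (ratf _ _) (ratf _ _) e.
by rewrite /ev_qrep (ev_frac_transfer tx tx' ea) (ev_frac_transfer tx tx' eb).
Qed.

Lemma proper_qrep_of z : exists t, proper_qrep t /\ z = ev_qrep iota x y t.
Proof.
have /eqP ez := xchooseP (in_gen_qrep (gen z)).
have [t [pt et]] := qrep_proper_eq iota (xchoose (in_gen_qrep (gen z))).
by exists t; rewrite -et.
Qed.

Lemma transportB : {morph transport : u v / u - v}.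
Proof.
move=> u v; have [tu [pu ->]] := proper_qrep_of u; have [tv [pv ->]] := proper_qrep_of v.
by rewrite (ev_qrepB _ tx pu pv) !transport_ev_qrep ev_qrepB.
Qed.

Lemma transportM : {morph transport : u v / u * v}.
Proof.
move=> u v; have [tu [pu ->]] := proper_qrep_of u; have [tv [pv ->]] := proper_qrep_of v.
by rewrite (ev_qrepM tx hy pu pv) !transport_ev_qrep (ev_qrepM tx' hy').
Qed.

Lemma transportC P : transport (ev iota x P) = ev iota x' P.
Proof. by rewrite -(ev_qrepC iota x y) transport_ev_qrep ev_qrepC. Qed.

End Transport.

Lemma aut_extension (K L : fieldType) (iota : {rmorphism K -> L}) (h : {poly K}) x y x' y' :
  is_func_field iota h x y predT -> h != 0 -> ~~ odd (size h) ->
  transc iota x' -> y' ^+ 2 = ev iota x' h ->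
  exists s : {rmorphism L -> L}, [/\ fixesK iota s, s x = x' & s y = y'].
Proof.
case=> tx hy _ _ hgen nh eh tx' hy'.
have gen z : in_gen iota x y z by exact: hgen.
pose f := transport x' y' gen.
have fC := transportC y' tx hy nh eh tx' gen.
have f1 : f 1 = 1 by have := fC 1; rewrite !ev1.
pose s : {rmorphism L -> L} :=
  HB.pack f (GRing.isZmodMorphism.Build _ _ f (transportB y' tx hy nh eh tx' gen))
            (GRing.isMonoidMorphism.Build _ _ f (f1, transportM tx hy nh eh tx' hy' gen)).
exists s; split=> /=.
- by move=> k; have := fC k%:P; rewrite !evC.
- by have := fC 'X; rewrite !evX.
- by have := transport_ev_qrep y' tx hy nh eh tx' gen (0, 1, 1, 1); rewrite !ev_qrep_w.
Qed.

Definition dickson_coef (m i : nat) := ((m * 'C(m - i, i)) %/ (m - i))%N.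

Lemma dickson_coefS n i :
  dickson_coef n.+2 i.+1 = ('C(n.+1 - i, i.+1) + 'C(n - i, i))%N.
Proof.
rewrite /dickson_coef; case: (leqP i n) => hin; last first.
  rewrite !bin_small ?muln0 ?div0n //; lia.
have [k ->] : exists k, n = (i + k)%N by exists (n - i)%N; lia.
rewrite (_ : (i + k).+2 - i.+1 = k.+1)%N; last by lia.
rewrite (_ : (i + k).+1 - i = k.+1)%N; last by lia.
rewrite (_ : (i + k) - i = k)%N; last by lia.
have e := mul_bin_diag k.+1 i.
rewrite (_ : (i + k).+2 * 'C(k.+1, i.+1) = k.+1 * ('C(k.+1, i.+1) + 'C(k, i)))%N ?mulKn //.
by rewrite mulnDr /= e; lia.
Qed.

Lemma dickson_coef_small m i : (m < i.*2)%N -> dickson_coef m i = 0%N.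
Proof. by move=> h; rewrite /dickson_coef bin_small ?muln0 ?div0n //; lia. Qed.

Lemma dickson_coef0 m : (0 < m)%N -> dickson_coef m 0 = 1%N.
Proof. by move=> h; rewrite /dickson_coef subn0 bin0 muln1 divnn h. Qed.

Section DicksonValues.
Variable F : fieldType.

(* [dickson2 al z m] is the value at [z] of the Dickson polynomial of the second kind. *)
Definition dickson2_term (al z : F) (m i : nat) : F :=
  ('C(m - i, i))%:R * (- al) ^+ i * z ^+ (m - 2 * i).

Definition dickson2 (al z : F) (m : nat) : F := \sum_(0 <= i < m.+1) dickson2_term al z m i.

Lemma dickson2_term_small al z m i : (m < i.*2)%N -> dickson2_term al z m i = 0.
Proof. by move=> h; rewrite /dickson2_term bin_small ?mul0r //; lia. Qed.

Lemma dickson2_termS al z n i :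
  dickson2_term al z n.+2 i.+1 = z * dickson2_term al z n.+1 i.+1 - al * dickson2_term al z n i.
Proof.
rewrite /dickson2_term; case: (leqP i n) => hin; last first.
  by rewrite !bin_small ?mul0r ?mulr0 ?subrr //; lia.
have [k ek] : exists k, n = (i + k)%N by exists (n - i)%N; lia.
rewrite (_ : n.+2 - i.+1 = k.+1)%N; last by lia.
rewrite (_ : n.+1 - i.+1 = k)%N; last by lia.
rewrite (_ : n - i = k)%N; last by lia.
rewrite (_ : n.+2 - 2 * i.+1 = n - 2 * i)%N; last by lia.
rewrite binS natrD; case: (leqP (2 * i).+1 n) => h2.
  rewrite (_ : n - 2 * i = (n.+1 - 2 * i.+1).+1)%N; last by lia.
  by rewrite !exprS; ring.
by rewrite (bin_small (_ : k < i.+1)%N); [rewrite !exprS; ring | lia].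
Qed.

Lemma dickson2S al z n :
  dickson2 al z n.+2 = z * dickson2 al z n.+1 - al * dickson2 al z n.
Proof.
rewrite /dickson2 big_nat_recl // [in X in z * X]big_nat_recl //.
under eq_bigr do rewrite dickson2_termS.
rewrite big_split /= -mulr_sumr sumrN -mulr_sumr.
rewrite [\sum_(0 <= i < n.+2) dickson2_term al z n.+1 i.+1]big_nat_recr //=.
rewrite [\sum_(0 <= i < n.+2) dickson2_term al z n i]big_nat_recr //=.
rewrite (dickson2_term_small _ _ (_ : n < (n.+1).*2)%N); last by lia.
rewrite (dickson2_term_small _ _ (_ : n.+1 < (n.+2).*2)%N); last by lia.
by rewrite !addr0 /dickson2_term !muln0 !subn0 !bin0 !expr0 !mul1r exprS; ring.
Qed.

Lemma dickson20 al z : dickson2 al z 0 = 1.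
Proof. by rewrite /dickson2 big_nat1 /dickson2_term bin0 !expr0 !mul1r. Qed.

Lemma dickson21 al z : dickson2 al z 1 = z.
Proof.
rewrite /dickson2 big_nat_recr //= big_nat1 /dickson2_term /= bin0n bin0 !expr0 !mul1r.
by rewrite !mul0r addr0 muln0 subn0 expr1.
Qed.

Lemma dickson_hornerE (al z : F) m :
  (dickson m al).[z] =
  \sum_(0 <= i < m.+1) (dickson_coef m i)%:R * (- al) ^+ i * z ^+ (m - 2 * i).
Proof.
rewrite /dickson horner_sum.
under eq_bigr do rewrite hornerZ hornerXn.
rewrite (big_ord_widen _ (fun i => (dickson_coef m i)%:R * (- al) ^+ i * z ^+ (m - 2 * i))
  (_ : m./2.+1 <= m.+1)%N); last by rewrite ltnS leq_half_double; lia.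
rewrite big_mkcond big_mkord; apply: eq_bigr => i _.
case: ifP => // /negbT; rewrite -leqNgt => hi.
by rewrite dickson_coef_small ?mul0r // -ltn_half_double.
Qed.

Lemma dickson_dickson2 (al z : F) n :
  (dickson n.+2 al).[z] = dickson2 al z n.+2 - al * dickson2 al z n.
Proof.
rewrite dickson_hornerE /dickson2 big_nat_recl // [in RHS]big_nat_recl // dickson_coef0 //.
rewrite (eq_bigr (fun i => dickson2_term al z n.+2 i.+1 - al * dickson2_term al z n i));
  last first.
  move=> i _; rewrite dickson_coefS natrD /dickson2_term.
  rewrite (_ : n.+2 - 2 * i.+1 = n - 2 * i)%N; last by lia.
  by rewrite (_ : n.+2 - i.+1 = n.+1 - i)%N ?exprS; [ring | lia].
rewrite sumrB -mulr_sumr [\sum_(0 <= i < n.+2) dickson2_term al z n i]big_nat_recr //=.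
rewrite (dickson2_term_small _ _ (_ : n < (n.+1).*2)%N); last by lia.
by rewrite /dickson2_term subn0 bin0 addr0; ring.
Qed.

Lemma dickson_sum_pow (t s : F) m : (0 < m)%N ->
  (dickson m (t * s)).[t + s] = t ^+ m + s ^+ m.
Proof.
case: m => // [] [|n] _.
  rewrite dickson_hornerE big_nat_recr //= big_nat1 dickson_coef0 //.
  by rewrite /dickson_coef /= bin0n muln0 div0n !expr0 !mulr1 mul0r addr0 mul1r expr1.
rewrite dickson_dickson2; set E := dickson2 (t * s) (t + s).
suff /(_ n) [] : forall n, E n.+2 - t * s * E n = t ^+ n.+2 + s ^+ n.+2 /\
    E n.+3 - t * s * E n.+1 = t ^+ n.+3 + s ^+ n.+3 by [].
elim=> [|k [IH1 IH2]].
  by rewrite /E !dickson2S dickson21 dickson20; split; ring.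
split=> //; transitivity ((t + s) * (E k.+3 - t * s * E k.+1) - t * s * (E k.+2 - t * s * E k)).
  by rewrite /E (dickson2S _ _ k.+2) (dickson2S _ _ k); ring.
by rewrite IH1 IH2 !exprS; ring.
Qed.

End DicksonValues.

Lemma map_dickson (K L : fieldType) (iota : {rmorphism K -> L}) m (al : K) :
  map_poly iota (dickson m al) = dickson m (iota al).
Proof.
rewrite /dickson rmorph_sum; apply: eq_bigr => i _.
by rewrite /= map_polyZ map_polyXn rmorphM rmorph_nat rmorphXn rmorphN.
Qed.

Lemma ev_dickson (K L : fieldType) (iota : {rmorphism K -> L}) (al : K) x m :
  x != 0 -> (0 < m)%N ->
  ev iota (x + iota al / x) (dickson m al) = x ^+ m + (iota al / x) ^+ m.
Proof.
move=> nx m0; rewrite /ev map_dickson -dickson_sum_pow //.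
by rewrite mulrCA divff ?mulr1.
Qed.

Lemma ev_frac_fixesK (K L : fieldType) (iota : {rmorphism K -> L}) (t : {rmorphism L -> L}) x P Q :
  fixesK iota t -> t (ev_frac iota x P Q) = ev_frac iota (t x) P Q.
Proof. by move=> ht; rewrite /ev_frac fmorph_div !ev_fixesK. Qed.

Section InvolutionInvariants.
Variables (K L : fieldType) (iota : {rmorphism K -> L}) (al : K).
Hypothesis nal : al != 0.

Definition twist d (P : {poly K}) : {poly K} :=
  \poly_(i < d.+1) (P`_(d - i) * al ^+ (d - i)).

Lemma ev_twist d (P : {poly K}) z : (size P <= d.+1)%N -> z != 0 ->
  ev iota z (twist d P) = z ^+ d * ev iota (iota al / z) P.
Proof.
move=> hs nz.
rewrite (ev_wide _ _ (_ : size (twist d P) <= d.+1)%N); last exact: size_poly.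
rewrite (ev_wide _ _ hs) mulr_sumr (reindex_inj rev_ord_inj) /=.
apply: eq_bigr => i _; rewrite coef_poly /= subSS.
have hi : (i <= d)%N by rewrite -ltnS.
rewrite ifT; last by lia.
rewrite subKn // rmorphM rmorphXn.
move: hi; move: (nat_of_ord i) => j hj.
have [k ->] : exists k, d = (k + j)%N by exists (d - j)%N; rewrite subnK.
rewrite addnK exprD expr_div_n.
have nzj : z ^+ j != 0 by rewrite expf_neq0.
by field; rewrite nzj.
Qed.

Lemma twist_neq0 d (P : {poly K}) : P != 0 -> (size P <= d.+1)%N -> twist d P != 0.
Proof.
move=> nP hs; apply/eqP => /(congr1 (fun p : {poly K} => p`_(d - (size P).-1))) /=.
rewrite coef_poly coef0 ifT; last by lia.
rewrite (_ : d - (d - (size P).-1) = (size P).-1)%N; last by lia.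
by apply/eqP; rewrite mulf_neq0 ?expf_neq0 // -lead_coefE lead_coef_eq0.
Qed.

Lemma transc_div x : transc iota x -> transc iota (iota al / x).
Proof.
move=> tx P nP; have hs : (size P <= (size P).+1)%N by [].
have := ev_transc_neq0 tx (twist_neq0 nP hs).
by rewrite (ev_twist hs (transc_neq0 tx)) mulf_eq0 negb_or => /andP[].
Qed.

(* Multiplying [P(x + al/x)] by [x^n], with [n] the degree of [P], gives a polynomial in [x]
   whose leading coefficient is that of [P]. *)
Lemma transc_add_div x : transc iota x -> transc iota (x + iota al / x).
Proof.
move=> tx P nP; have nx := transc_neq0 tx.
set u := x + iota al / x.
have sP : size P = (size P).-1.+1 by rewrite prednK // size_poly_gt0.
set n := (size P).-1 in sP.
pose M i := ('X^2 + al%:P) ^+ i * 'X^(n - i) : {poly K}.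
pose W := \sum_(i < n.+1) P`_i *: M i.
have eW : ev iota x W = x ^+ n * ev iota u P.
  rewrite ev_sum (ev_wide _ _ (_ : size P <= n.+1)%N) ?sP // mulr_sumr.
  apply: eq_bigr => i _; rewrite evZ evM ev_exp evD !evXn evC.
  have hi : (i <= n)%N by rewrite -ltnS.
  move: hi; move: (nat_of_ord i) => j hj.
  have [k ->] : exists k, n = (k + j)%N by exists (n - j)%N; rewrite subnK.
  rewrite addnK /u exprD (_ : x ^+ 2 + iota al = x * (x + iota al / x)); last by field.
  by rewrite exprMn; ring.
have nW : W != 0.
  apply/eqP => /(congr1 (fun p : {poly K} => p`_(2 * n))) /=.
  rewrite coef0 /W coef_sum big_ord_recr /= big1; last first.
    move=> i _; rewrite coefZ (nth_default _ (_ : size (M i) <= 2 * n)%N) ?mulr0 //.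
    apply: (leq_trans (size_polyMleq _ _)).
    apply: (@leq_trans (((size ('X^2 + al%:P : {poly K})).-1 * i).+1 + (n - i).+1).-1).
      rewrite -!subn1 leq_sub2r // leq_add ?size_polyXn // subn1; exact: size_poly_exp_leq.
    by rewrite size_XnaddC //=; have := ltn_ord i; lia.
  rewrite add0r coefZ /M subnn expr0 mulr1.
  have mo : ('X^2 + al%:P : {poly K}) ^+ n \is monic by rewrite monic_exp // monicXnaddC.
  have sz : (size (('X^2 + al%:P : {poly K}) ^+ n)).-1 = (2 * n)%N.
    by rewrite size_exp size_XnaddC.
  rewrite -sz -lead_coefE (monicP mo) mulr1 => /eqP.
  by rewrite /n -lead_coefE lead_coef_eq0 (negbTE nP).
have := ev_transc_neq0 tx nW; rewrite eW mulf_eq0 negb_or => /andP[].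
by [].
Qed.

Lemma is_ratf_twist x (P Q : {poly K}) : x != 0 -> is_ratf iota x (ev_frac iota (iota al / x) P Q).
Proof.
move=> nx; set d := (size P + size Q)%N.
exists (twist d P), (twist d Q).
rewrite /ev_frac !ev_twist //; try (rewrite /d; lia).
by rewrite invfM mulrACA divff ?mul1r // expf_neq0.
Qed.

(* The Dickson polynomial with the usual convention [D_0 = 2]; [dickson 0 al] is [0]. *)
Definition dickson_std k : {poly K} := if k is 0 then 2%:R%:P else dickson k al.

Lemma ev_dickson_std x k : x != 0 ->
  ev iota (x + iota al / x) (dickson_std k) = x ^+ k + (iota al / x) ^+ k.
Proof. by case: k => [|k] nx; rewrite ?ev_dickson // evC rmorph_nat !expr0. Qed.

Hypothesis n2 : (2%:R : K) != 0.

(* Average [F] with its mirror image and pair the monomials [x^(d+k)] and [x^(d-k)]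
   into [x^d D_k(x + al/x, al)]. *)
Lemma sym_poly_trace x d (F : {poly K}) : x != 0 -> (size F <= (2 * d).+1)%N ->
  iota al ^+ d * ev iota x F = x ^+ (2 * d) * ev iota (iota al / x) F ->
  exists G, ev iota x F = x ^+ d * ev iota (x + iota al / x) G.
Proof.
move=> nx hs hF.
pose cc j := if (d <= j)%N then 1 else (al ^+ (d - j))^-1.
pose kk j := if (d <= j)%N then (j - d)%N else (d - j)%N.
exists (\sum_(j < (2 * d).+1) (F`_j * cc j / 2%:R) *: dickson_std (kk j)).
have nal' : iota al != 0 by rewrite fmorph_eq0.
have n2' : (2%:R : L) != 0 by rewrite -(rmorph_nat iota) fmorph_eq0.
set x' := iota al / x.
set c := x ^+ (2 * d) / iota al ^+ d.
have hF' : ev iota x F = c * ev iota x' F.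
  by rewrite /c mulrAC -hF; field; rewrite expf_neq0.
rewrite (_ : ev iota x F = (ev iota x F + c * ev iota x' F) / 2%:R); last first.
  by rewrite -hF'; field.
rewrite !(ev_wide _ _ hs) mulr_sumr -big_split mulr_suml ev_sum mulr_sumr.
apply: eq_bigr => j _ /=.
rewrite evZ ev_dickson_std // !rmorphM fmorphV rmorph_nat /cc /kk /x'.
move: (F`_j) => f; move: (nat_of_ord j) => jn.
case: leqP => hj.
  have [k ->] : exists k, jn = (d + k)%N by exists (jn - d)%N; rewrite subnKC.
  rewrite addKn rmorph1 /c mul2n -addnn !exprD !expr_div_n.
  have := expf_neq0 d nx; have := expf_neq0 k nx; have := expf_neq0 d nal'.
  by move=> h1 h2 h3; field; rewrite h1 h2 h3 n2'.
have [k ek] : exists k, d = (jn + k)%N by exists (d - jn)%N; rewrite subnKC // ltnW.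
rewrite /c ek addKn fmorphV rmorphXn mul2n -addnn !exprD !expr_div_n.
have := expf_neq0 jn nx; have := expf_neq0 k nx; have := expf_neq0 jn nal'.
have := expf_neq0 k nal'.
by move=> h1 h2 h3 h4; field; rewrite h1 h2 h3 h4 n2'.
Qed.

(* Multiplying through by the twist of the denominator makes numerator and denominator
   symmetric. *)
Lemma sym_frac_trace x (P Q : {poly K}) : transc iota x -> Q != 0 ->
  ev_frac iota (iota al / x) P Q = ev_frac iota x P Q ->
  exists G1 G2, ev_frac iota x P Q = ev_frac iota (x + iota al / x) G1 G2.
Proof.
move=> tx nQ hsym.
have nx := transc_neq0 tx; have tx' := transc_div tx.
have nal' : iota al != 0 by rewrite fmorph_eq0.
set x' := iota al / x in hsym tx' *.
have xx : iota al / x' = x by rewrite /x' invf_div mulrC divfK.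
have nx' : x' != 0 by rewrite mulf_neq0 ?invr_eq0.
set d := (size P + size Q)%N.
have hP : (size P <= d.+1)%N by rewrite /d; lia.
have hQ : (size Q <= d.+1)%N by rewrite /d; lia.
have eQ := ev_transc_neq0 tx nQ; have eQ' := ev_transc_neq0 tx' nQ.
have ndx := expf_neq0 d nx.
have cross : ev iota x' P = ev iota x P * ev iota x' Q / ev iota x Q.
  move: hsym; rewrite /ev_frac => /eqP; rewrite eqr_div // => /eqP e.
  by rewrite -e mulfK.
have tQ' : ev iota x' (twist d Q) = x' ^+ d * ev iota x Q by rewrite ev_twist // xx.
have tQ : ev iota x (twist d Q) = x ^+ d * ev iota x' Q by rewrite ev_twist.
have sizeM (R : {poly K}) : (size R <= d.+1)%N -> (size (R * twist d Q)%R <= (2 * d).+1)%N.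
  move=> hR; apply: (leq_trans (size_polyMleq _ _)).
  have : (size (twist d Q) <= d.+1)%N by apply: size_poly.
  lia.
have [GN eN] : exists G, ev iota x (P * twist d Q) = x ^+ d * ev iota (x + x') G.
  apply: sym_poly_trace => //; first exact: sizeM.
  rewrite !evM tQ' tQ cross /x' mul2n -addnn !exprD !expr_div_n.
  by field; rewrite ?expf_eq0 ?(negbTE nx) ?andbF ?eQ ?nx ?nal'.
have [GD eD] : exists G, ev iota x (Q * twist d Q) = x ^+ d * ev iota (x + x') G.
  apply: sym_poly_trace => //; first exact: sizeM.
  rewrite !evM tQ' tQ /x' mul2n -addnn !exprD !expr_div_n.
  by field; rewrite ?expf_eq0 ?(negbTE nx) ?andbF ?nal'.
exists GN, GD.
rewrite (_ : ev_frac iota x P Q = ev iota x (P * twist d Q) / ev iota x (Q * twist d Q)).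
  by rewrite eN eD /ev_frac invfM mulrACA divff ?mul1r.
by rewrite !evM tQ /ev_frac; field; rewrite eQ eQ' ndx.
Qed.

End InvolutionInvariants.

Section FixedField.
Variables (K L : fieldType) (iota : {rmorphism K -> L}) (h : {poly K}) (al : K) (x y : L).
Variables (t : {rmorphism L -> L}) (lam : L).
Hypotheses (hf : is_func_field iota h x y predT) (nh : h != 0) (eh : ~~ odd (size h)).
Hypotheses (nal : al != 0) (ht : fixesK iota t) (htx : t x = iota al / x).
Hypothesis hty : t y = y * lam.

Let tx : transc iota x. Proof. by case: hf. Qed.
Let nx : x != 0. Proof. exact: transc_neq0 tx. Qed.

Lemma fixed_coords P1 P2 Q1 Q2 :
  is_ratf iota x lam -> P2 != 0 -> Q2 != 0 ->
  let z := ev_frac iota x P1 P2 + ev_frac iota x Q1 Q2 * y in t z = z ->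
  ev_frac iota (iota al / x) P1 P2 = ev_frac iota x P1 P2 /\
  ev_frac iota (iota al / x) Q1 Q2 * lam = ev_frac iota x Q1 Q2.
Proof.
move=> rlam nP2 nQ2 z hz; have [_ hy _ _ _] := hf.
apply: (ratf_coord_unique tx hy nh eh).
- exact: (is_ratf_twist _ nal _ _ nx).
- by apply: is_ratfM => //; exact: (is_ratf_twist _ nal _ _ nx).
- by exists P1, P2.
- by exists Q1, Q2.
- by rewrite -[RHS]/z -hz /z rmorphD rmorphM !ev_frac_fixesK // htx hty; ring.
Qed.

Hypothesis n2 : (2%:R : K) != 0.

(* A fixed element [A + B y] has symmetric [A], and [B / e] is symmetric as well since [t]
   multiplies both [B] and [e] by [lam^-1]. *)
Lemma fixed_in_gen e : is_ratf iota x lam -> is_ratf iota x e -> e != 0 ->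
  t (y * e) = y * e -> forall z, t z = z -> in_gen iota (x + iota al / x) (y * e) z.
Proof.
move=> rlam [E1 [E2 eE]] ne hv z hz; have [_ hy _ _ hgen] := hf.
have ny : y != 0.
  by apply: contra_eq_neq hy => ->; rewrite expr0n eq_sym ev_transc_neq0.
have [P1 [P2 [Q1 [Q2 ez]]]] := hgen z isT.
have [P1' [P2' [nP2 eP]]] := ev_frac_proper iota P1 P2.
have [Q1' [Q2' [nQ2 eQ]]] := ev_frac_proper iota Q1 Q2.
rewrite -/(ev_frac iota x P1 P2) -/(ev_frac iota x Q1 Q2) eP eQ in ez.
have [eA eB] := fixed_coords rlam nP2 nQ2 (etrans (congr1 t (esym ez)) (etrans hz ez)).
have nE1 : E1 != 0 by apply: contraNneq ne => E10; rewrite eE /ev_frac E10 ev0 mul0r.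
have te : t e * lam = e by apply: (mulfI ny); rewrite -[RHS]hv rmorphM hty; ring.
have nl : lam != 0 by apply: contraNneq ne => l0; rewrite -te l0 mulr0.
have nte : t e != 0 by apply: contraNneq ne => l0; rewrite -te l0 mul0r.
have eC : ev_frac iota (iota al / x) (Q1' * E2) (Q2' * E1) =
          ev_frac iota x (Q1' * E2) (Q2' * E1).
  have teE : t e = ev_frac iota (iota al / x) E1 E2 by rewrite eE ev_frac_fixesK // htx.
  rewrite -!ev_fracM -!(ev_fracV iota _ E1 E2) -teE -eE -eB -[in RHS]te.
  by field; rewrite nl nte.
have [G1 [G2 eG]] := sym_frac_trace nal n2 tx nP2 eA.
have [H1 [H2 eH]] := sym_frac_trace nal n2 tx (mulf_neq0 nQ2 nE1) eC.
exists G1, G2, H1, H2.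
rewrite -/(ev_frac iota _ G1 G2) -/(ev_frac iota _ H1 H2) -eG -eH ez.
by rewrite -ev_fracM -(ev_fracV iota _ E1 E2) -eE; field; rewrite ne.
Qed.

Lemma fixed_field_func_field (h' : {poly K}) e :
  is_ratf iota x lam -> is_ratf iota x e -> e != 0 -> t (y * e) = y * e ->
  (y * e) ^+ 2 = ev iota (x + iota al / x) h' ->
  is_func_field iota h' (x + iota al / x) (y * e) (fun z => t z == z).
Proof.
move=> rlam re ne hv hv2; split => //.
- exact: transc_add_div.
- apply/eqP; rewrite rmorphD fmorph_div htx ht.
  by field; rewrite nx fmorph_eq0.
- exact/eqP.
- by move=> z /eqP; apply: fixed_in_gen.
Qed.

End FixedField.

Lemma aut_invol (K L : fieldType) (iota : {rmorphism K -> L}) (al : K) x y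
    (t : {rmorphism L -> L}) lam :
  (forall z, in_gen iota x y z) -> al != 0 -> x != 0 ->
  fixesK iota t -> t x = iota al / x -> t y = y * lam -> lam * t lam = 1 ->
  forall z, t (t z) = z.
Proof.
move=> hgen nal nx ht htx hty hl z.
have [P1 [P2 [Q1 [Q2 ->]]]] := hgen z.
have ttx : t (t x) = x.
  by rewrite htx fmorph_div ht htx invf_div mulrC divfK // fmorph_eq0.
have tty : t (t y) = y by rewrite hty rmorphM hty -mulrA hl mulr1.
rewrite -/(ev_frac iota x P1 P2) -/(ev_frac iota x Q1 Q2).
by do 2 rewrite rmorphD ev_frac_fixesK // rmorphM ev_frac_fixesK //; rewrite ttx tty.
Qed.

Lemma size_hyp_poly (K : fieldType) g (a al : K) :
  (0 < g)%N -> size (hyp_poly g a al) = (2 * g + 2)%N.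
Proof.
move=> hg; rewrite /hyp_poly -addrA size_polyDl size_polyXn ?addn1 //; first lia.
apply: (leq_ltn_trans (size_polyD _ _)); rewrite gtn_max.
apply/andP; split; apply: (leq_ltn_trans (size_scale_leq _ _)).
  rewrite size_polyXn; lia.
rewrite size_polyX; lia.
Qed.

Section ConjugateInvolution.
Variables (K L : fieldType) (iota : {rmorphism K -> L}) (g : nat) (a al c : K) (x y : L).
Hypotheses (hg : (0 < g)%N) (nal : al != 0) (n2 : (2%:R : K) != 0).
Hypothesis hc : c ^+ 2 = al ^+ g.+1.
Hypothesis hf : is_func_field iota (hyp_poly g a al) x y predT.

Let tx : transc iota x. Proof. by case: hf. Qed.
Let nx : x != 0. Proof. exact: transc_neq0 tx. Qed.
Let nal' : iota al != 0. Proof. by rewrite fmorph_eq0. Qed.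
Let nh : hyp_poly g a al != 0. Proof. by rewrite -size_poly_gt0 size_hyp_poly // addn2. Qed.
Let eh : ~~ odd (size (hyp_poly g a al)).
Proof. by rewrite size_hyp_poly // (_ : 2 * g + 2 = g.+1.*2)%N ?odd_double //; lia. Qed.

Local Notation u := (x + iota al / x).
Local Notation lam := (iota c / x ^+ g.+1).

Lemma ev_hyp_poly_factor z : z != 0 ->
  ev iota z (hyp_poly g a al) = z ^+ g.+1 * (z ^+ g + (iota al / z) ^+ g + iota a).
Proof.
move=> nz; rewrite /hyp_poly !evD !evZ !evXn evX rmorphXn expr_div_n.
rewrite (_ : 2 * g + 1 = g.+1 + g)%N ?exprD ?addn1; last by lia.
rewrite exprS expr1.
by field; rewrite expf_neq0.
Qed.

Lemma hyp_sqr_dickson : y ^+ 2 = x ^+ g.+1 * ev iota u (dickson g al + a%:P).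
Proof. by have [_ -> _ _ _] := hf; rewrite -/(ev _ _ _) ev_hyp_poly_factor // evD ev_dickson // evC. Qed.

Lemma conj_aut_exists : exists s : {rmorphism L -> L},
  fixesK iota s /\ s x = iota al / x /\ s y = y * iota c / x ^+ g.+1.
Proof.
have nx' : iota al / x != 0 by rewrite mulf_neq0 ?invr_eq0.
have hy' : (y * iota c / x ^+ g.+1) ^+ 2 = ev iota (iota al / x) (hyp_poly g a al).
  have xx : iota al / (iota al / x) = x by rewrite invf_div mulrC divfK.
  rewrite ev_hyp_poly_factor // xx expr_div_n exprMn hyp_sqr_dickson.
  rewrite evD ev_dickson // evC -rmorphXn hc rmorphXn !expr_div_n.
  by rewrite !exprS expr0; field; rewrite ?expf_neq0 ?nx.
by have [s [hs hsx hsy]] := aut_extension hf nh eh (transc_div nal tx) hy'; exists s.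
Qed.

Variables (s w : {rmorphism L -> L}).
Hypotheses (hs : fixesK iota s) (hsx : s x = iota al / x) (hsy : s y = y * iota c / x ^+ g.+1).
Hypotheses (hw : fixesK iota w) (hwx : w x = x) (hwy : w y = - y).

Let hsy' : s y = y * lam. Proof. by rewrite hsy mulrA. Qed.

Let is_ratf_lam : is_ratf iota x lam.
Proof. by exists c%:P, 'X^(g.+1); rewrite /ev_frac evC evXn. Qed.

Lemma conj_invol z : s (s z) = z.
Proof.
have [_ _ _ _ hgen] := hf.
apply: (aut_invol (fun z => hgen z isT) nal nx hs hsx hsy').
have nc : iota c != 0.
  rewrite fmorph_eq0; apply: contraTneq (expf_neq0 g.+1 nal) => c0.
  by rewrite -hc c0 expr2 mul0r eqxx.
rewrite fmorph_div hs rmorphXn hsx expr_div_n -rmorphXn -hc rmorphXn.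
by field; rewrite ?expf_neq0 ?nx.
Qed.

Lemma conj_neq_hyperelliptic : exists z, s z != w z.
Proof.
exists x; rewrite hsx hwx; apply: contra_neq (transc_sqr_neq al tx) => e.
by rewrite expr2 -{1}e divfK.
Qed.

Lemma conj_fixed_func_field (h' : {poly K}) e :
  is_ratf iota x e -> e != 0 -> s e * lam = e ->
  x ^+ g.+1 * e ^+ 2 * ev iota u (dickson g al + a%:P) = ev iota u h' ->
  exists u v, is_func_field iota h' u v (fun z => s z == z).
Proof.
move=> re ne hse hsq; exists u, (y * e).
apply: (fixed_field_func_field hf nh eh nal hs hsx hsy' n2 is_ratf_lam re ne).
  by rewrite rmorphM hsy' -mulrA [lam * _]mulrC hse.
by rewrite exprMn hyp_sqr_dickson -hsq; ring.
Qed.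

Lemma conj_hyp_fixed_func_field (h' : {poly K}) e :
  is_ratf iota x e -> e != 0 -> s e * lam = - e ->
  x ^+ g.+1 * e ^+ 2 * ev iota u (dickson g al + a%:P) = ev iota u h' ->
  exists u v, is_func_field iota h' u v (fun z => w (s z) == z).
Proof.
move=> re ne hse hsq; exists u, (y * e).
pose ws : {rmorphism L -> L} := (w \o s)%FUN.
have hws : fixesK iota ws by move=> k /=; rewrite hs hw.
have hwsx : ws x = iota al / x by rewrite /= hsx fmorph_div hw hwx.
have hwsy : ws y = y * - lam by rewrite /= hsy' rmorphM hwy fmorph_div hw rmorphXn hwx mulrN mulNr.
apply: (fixed_field_func_field hf nh eh nal hws hwsx hwsy n2 (is_ratfN is_ratf_lam) re ne).
  have [P [Q eE]] := re.
  have wse : w (s e) = s e.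
    by rewrite eE !ev_frac_fixesK // hsx fmorph_div hw hwx.
  by rewrite rmorphM hwsy /= wse -mulrA mulNr [lam * _]mulrC hse; ring.
by rewrite exprMn hyp_sqr_dickson -hsq; ring.
Qed.

Lemma odd_genus_quotients j : g = (j + j).+1 -> c = al ^+ j.+1 ->
  (exists u v, is_func_field iota (dickson g al + a%:P) u v (fun z => s z == z)) /\
  (exists u v, is_func_field iota (('X^2 - (4 * al)%:P) * (dickson g al + a%:P)) u v
                             (fun z => w (s z) == z)).
Proof.
move=> ej ec; have nxj := expf_neq0 j nx; have nalj := expf_neq0 j nal'.
split.
- apply: (conj_fixed_func_field (e := (x ^+ j.+1)^-1)).
  + by exists 1, 'X^(j.+1); rewrite /ev_frac ev1 evXn mul1r.
  + by rewrite invr_eq0 expf_neq0.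
  + rewrite fmorphV rmorphXn hsx ec ej rmorphXn !expr_div_n !exprS !exprD.
    by field; rewrite nxj nalj nx nal'.
  + by rewrite ej !exprS !exprD; field; rewrite nxj nx.
- apply: (conj_hyp_fixed_func_field (e := (x - iota al / x) / x ^+ j.+1)).
  + exists ('X^2 - al%:P), 'X^(j.+2); rewrite /ev_frac evB !evXn evC.
    by rewrite !exprS; field; rewrite nxj nx.
  + rewrite mulf_neq0 ?invr_eq0 ?expf_neq0 // subr_eq0.
    by apply: contraNneq (transc_sqr_neq al tx) => e; rewrite expr2 {2}e mulrC divfK.
  + rewrite fmorph_div rmorphB fmorph_div hs rmorphXn !hsx ec ej rmorphXn !expr_div_n.
    by rewrite !exprS !exprD; field; rewrite nxj nalj nx nal'.
  + rewrite evM evB evXn evC rmorphM rmorph_nat ej !exprS !exprD.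
    by field; rewrite nxj nx.
Qed.

Lemma even_genus_quotients m beta : g = (m + m)%N -> beta ^+ 2 = al -> c = beta ^+ g.+1 ->
  (exists u v, is_func_field iota (('X + (2 * beta)%:P) * (dickson g al + a%:P)) u v
                             (fun z => s z == z)) /\
  (exists u v, is_func_field iota (('X - (2 * beta)%:P) * (dickson g al + a%:P)) u v
                             (fun z => w (s z) == z)).
Proof.
move=> em hb ec.
have eA : iota al = iota beta * iota beta by rewrite -hb rmorphXn expr2.
have nB : iota beta != 0 by apply: contra_neq nal' => B0; rewrite eA B0 mul0r.
have nxm := expf_neq0 m nx; have nBm := expf_neq0 m nB.
split.
- apply: (conj_fixed_func_field (e := (x + iota beta) / x ^+ m.+1)).
  + by exists ('X + beta%:P), 'X^(m.+1); rewrite /ev_frac evD evX evC evXn.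
  + by rewrite mulf_neq0 ?invr_eq0 ?expf_neq0 ?transc_add_neq0.
  + rewrite fmorph_div rmorphD hs rmorphXn !hsx ec em rmorphXn eA !expr_div_n exprMn.
    by rewrite !exprS !exprD; field; rewrite nxm nBm nx nB.
  + rewrite evM !evD evX !evC rmorphM rmorph_nat eA em !exprS !exprD.
    by field; rewrite nxm nx.
- apply: (conj_hyp_fixed_func_field (e := (x - iota beta) / x ^+ m.+1)).
  + by exists ('X - beta%:P), 'X^(m.+1); rewrite /ev_frac evB evX evC evXn.
  + by rewrite mulf_neq0 ?invr_eq0 ?expf_neq0 ?transc_sub_neq0.
  + rewrite fmorph_div rmorphB hs rmorphXn !hsx ec em rmorphXn eA !expr_div_n exprMn.
    by rewrite !exprS !exprD; field; rewrite nxm nBm nx nB.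
  + rewrite evM evB !evD evX !evC rmorphM rmorph_nat eA em !exprS !exprD.
    by field; rewrite nxm nx.
Qed.

End ConjugateInvolution.

Theorem theorem2 (K : finFieldType) (p n g : nat) (a al : K)
  (hp : prime p) (hp2 : (2 < p)%N) (hchar : p \in [pchar K])
  (hq : #|K| = (p ^ n)%N) (hg : (2 <= g)%N) (hgp : coprime g p)
  (hal : al != 0) (hsep : separable_poly (hyp_poly g a al)) :
  (* g odd: over F_q, with beta^(g+1) = alpha^((g+1)/2) *)
  (odd g ->
   forall (L : fieldType) (iota : {rmorphism K -> L}) (x y : L),
   is_func_field iota (hyp_poly g a al) x y predT ->
   (exists s : {rmorphism L -> L}, fixesK iota s /\ s x = iota al / x /\
        s y = y * iota (al ^+ (g.+1)./2) / x ^+ g.+1) /\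
   (forall s w : {rmorphism L -> L},
      fixesK iota s -> s x = iota al / x -> s y = y * iota (al ^+ (g.+1)./2) / x ^+ g.+1 ->
      fixesK iota w -> w x = x -> w y = - y ->
      [/\ (forall z, s (s z) = z), (exists z, s z != w z),
          (exists u v, is_func_field iota (dickson g al + a%:P) u v
                                     (fun z => s z == z)) &
          (exists u v, is_func_field iota (('X^2 - (4 * al)%:P) * (dickson g al + a%:P)) u v
                                     (fun z => w (s z) == z))]))
  /\
  (* g even: over F_q(beta) -- here K is any finite field containing beta *)
  (~~ odd g -> forall beta : K, beta ^+ 2 = al ->
   forall (L : fieldType) (iota : {rmorphism K -> L}) (x y : L),
   is_func_field iota (hyp_poly g a al) x y predT ->
   (exists s : {rmorphism L -> L}, fixesK iota s /\ s x = iota al / x /\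
        s y = y * iota (beta ^+ g.+1) / x ^+ g.+1) /\
   (forall s w : {rmorphism L -> L},
      fixesK iota s -> s x = iota al / x -> s y = y * iota (beta ^+ g.+1) / x ^+ g.+1 ->
      fixesK iota w -> w x = x -> w y = - y ->
      [/\ (forall z, s (s z) = z), (exists z, s z != w z),
          (exists u v, is_func_field iota (('X + (2 * beta)%:P) * (dickson g al + a%:P)) u v
                                     (fun z => s z == z)) &
          (exists u v, is_func_field iota (('X - (2 * beta)%:P) * (dickson g al + a%:P)) u v
                                     (fun z => w (s z) == z))])).
Proof.
have hg0 : (0 < g)%N by lia.
have n2 : (2%:R : K) != 0.
  by rewrite -(dvdn_pcharf hchar); apply/negP => /(dvdn_leq (isT : (0 < 2)%N)); lia.
split=> [og | eg beta hb] L iota x y hf.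
- have [j ej] : exists j, g = (j + j).+1.
    by exists g./2; rewrite -{1}(odd_double_half g) og -addnn add1n.
  have -> : (g.+1)./2 = j.+1 by rewrite ej (_ : (j + j).+2 = j.+1.*2)%N ?doubleK //; lia.
  have hc : (al ^+ j.+1) ^+ 2 = al ^+ g.+1 by rewrite -exprM ej; congr (_ ^+ _); lia.
  split; first exact: conj_aut_exists hg0 hal n2 hc hf.
  move=> s w hs hsx hsy hw hwx hwy.
  have [q1 q2] := odd_genus_quotients hg0 hal n2 hf hs hsx hsy hw hwx hwy ej erefl.
  split.
  - by move=> z; have -> := conj_invol hal hc hf hs hsx hsy z.
  - by have [z] := conj_neq_hyperelliptic hf hsx hwx; exists z.
  - exact: q1.
  - exact: q2.
- have [m em] : exists m, g = (m + m)%N.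
    by exists g./2; rewrite -{1}(odd_double_half g) (negbTE eg) -addnn add0n.
  have hc : (beta ^+ g.+1) ^+ 2 = al ^+ g.+1 by rewrite -hb -!exprM mulnC.
  split; first exact: conj_aut_exists hg0 hal n2 hc hf.
  move=> s w hs hsx hsy hw hwx hwy.
  have [q1 q2] := even_genus_quotients hg0 hal n2 hf hs hsx hsy hw hwx hwy em hb erefl.
  split.
  - by move=> z; have -> := conj_invol hal hc hf hs hsx hsy z.
  - by have [z] := conj_neq_hyperelliptic hf hsx hwx; exists z.
  - exact: q1.
  - exact: q2.
Qed.
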